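(* Let $t,\ell,m$ be integers with $1 \le t \le \ell \le m$, and let $s$ be an integer with $(\ell-t)m \le s \le \ell m$ and $s\ge 1$. Then the $s$-th generalized Hamming weight of $\widehat{C}_{\det}(t;\ell,m)$ is $$\hat{d}_s=\hat{n}-\sum_{i=0}^{\ell m-s-1}q^i,$$ where $\hat n=|\widehat{\mathcal D}_t(\ell,m)|$ is the length of the code (the sum is empty, i.e. $0$, when $s=\ell m$).
   Context: $q$ is a prime power. Let $\widehat{\mathcal D}_t(\ell,m)\subset\mathbb{P}^{\ell m-1}(\mathbb{F}_q)=\mathbb{P}(\mathrm{Mat}_{\ell\times m}(\mathbb{F}_q))$ be the set of points $[M]$ with $M\ne 0$ and $\mathrm{rk}(M)\le t$; let $\hat n=|\widehat{\mathcal D}_t(\ell,m)|$, enumerate its points and choose representatives $M_1,\dots,M_{\hat n}$. The determinantal code $\widehat{C}_{\det}(t;\ell,m)\subseteq\mathbb{F}_q^{\hat n}$ is the set of vectors $(f(M_1),\dots,f(M_{\hat n}))$ for $f$ ranging over linear forms in the entries of an $\ell\times m$ matrix of indeterminates; it has dimension $\ell m$. For a linear code $C\subseteq\mathbb{F}_q^n$ and a subspace $D\subseteq C$, the support weight $\|D\|$ is the number of coordinates $i$ such that some $c\in D$ has $c_i\ne0$; the $s$-th generalized Hamming weight is $d_s(C)=\min\{\|D\|: D\subseteq C \text{ a subspace}, \dim D=s\}$. *)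

From HB Require Import structures.
From mathcomp Require Import all_boot all_order all_algebra all_field.
Set Implicit Arguments. Unset Strict Implicit. Unset Printing Implicit Defensive.
Import GRing.Theory.
Local Open Scope ring_scope.

Section Det.
Variables (F : finFieldType) (l m : nat).

(* R is a system of representatives of the points of the projective
   variety \hat D_t(l,m): every element of R is a nonzero matrix of rank <= t,
   and every nonzero matrix of rank <= t is a nonzero scalar multiple of
   exactly one element of R. *)
Definition is_rep_system (t : nat) (R : {set 'M[F]_(l, m)}) : Prop :=
  (forall M, M \in R -> M != 0 /\ (\rank M <= t)%N) /\
  (forall M : 'M[F]_(l, m), M != 0 -> (\rank M <= t)%N ->
     exists! N, N \in R /\ exists a : F, a != 0 /\ M = a *: N).

Definition ev (R : {set 'M[F]_(l, m)}) (A : 'M[F]_(l, m)) : 'rV[F]_#|R| :=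
  \row_(i < #|R|) \sum_(a < l) \sum_(b < m) A a b * (enum_val i : 'M[F]_(l, m)) a b.

Definition detcode (R : {set 'M[F]_(l, m)}) : {vspace 'rV[F]_#|R|} :=
  (<<[seq ev R A | A : 'M[F]_(l, m)]>>)%VS.

End Det.

Definition support_weight (F : finFieldType) (n : nat) (D : {vspace 'rV[F]_n}) : nat :=
  #|[set i : 'I_n | [exists c : 'rV[F]_n, (c \in D) && (c 0 i != 0)]]|.

Definition is_ghw (F : finFieldType) (n : nat) (C : {vspace 'rV[F]_n}) (s d : nat) : Prop :=
  (exists D : {vspace 'rV[F]_n}, (D <= C)%VS /\ \dim D = s /\ support_weight D = d) /\
  (forall D : {vspace 'rV[F]_n}, (D <= C)%VS -> \dim D = s -> (d <= support_weight D)%N).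

From HB Require Import structures.
From mathcomp Require Import all_boot all_order all_algebra all_field.
From mathcomp Require Import zify.
Set Implicit Arguments. Unset Strict Implicit. Unset Printing Implicit Defensive.
Import GRing.Theory.
Local Open Scope ring_scope.

(* The support weight of a subcode D is n minus the number of representatives
   at which every codeword of D vanishes.  The linear forms defining D span a
   space of dimension dim D, so their common zeros form a space of matrices of
   dimension lm - dim D; each representative lying in it accounts for q - 1 of
   its nonzero elements, so at most (q^(lm - dim D) - 1)/(q - 1) representatives
   vanish on D.  Equality is reached by the forms supported off a set S of
   lm - s entries inside the first t rows: their common zeros are the matrices
   supported in S, all of rank at most t, hence all multiples of representatives. *)

Lemma span_ind (K : fieldType) (V : vectType K) (P : V -> Prop) (X : seq V) :
  P 0 -> (forall a u v, P u -> P v -> P (a *: u + v)) ->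
  {in X, forall x, P x} -> forall v, v \in <<X>>%VS -> P v.
Proof.
move=> P0 Plin PX v Xv; rewrite (coord_span (X := in_tuple X) Xv).
apply: (big_ind P) => // [u w Pu Pw | i _].
  by rewrite -[u]scale1r; apply: Plin.
by rewrite -[_ *: _]addr0; apply/Plin/P0/PX/mem_nth.
Qed.

Lemma card_rowspace (F : finFieldType) (k N : nat) (A : 'M[F]_(k, N)) :
  #|[set v : 'rV[F]_N | (v <= A)%MS]| = (#|F| ^ \rank A)%N.
Proof.
rewrite -[X in (_ ^ X)%N]mul1n -card_mx.
rewrite -(card_imset _ (row_free_inj (row_base_free A))).
apply: eq_card => v; rewrite inE; apply/idP/imsetP.
  by rewrite -(eq_row_base A) => /submxP [x ->]; exists x.
by move=> [x _ ->]; apply: submx_trans (submxMl _ _) _; rewrite eq_row_base.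
Qed.

Lemma card_mxvec_sub (F : finFieldType) (l m k : nat) (B : 'M[F]_(k, l * m)) :
  #|[set M : 'M[F]_(l, m) | (mxvec M <= B)%MS]| = (#|F| ^ \rank B)%N.
Proof.
rewrite -card_rowspace -(card_imset _ (can_inj mxvecK)); apply: eq_card => v.
rewrite inE; apply/imsetP/idP => [[M] | vB]; first by rewrite inE => ? ->.
by exists (vec_mx v); rewrite ?inE vec_mxK.
Qed.

Lemma card_top_rows (l m t : nat) : (t <= l)%N ->
  #|[set p : 'I_l * 'I_m | (p.1 < t)%N]| = (t * m)%N.
Proof.
move=> tl; have -> : [set p : 'I_l * 'I_m | (p.1 < t)%N] =
    setX (widen_ord tl @: [set: 'I_t]) [set: 'I_m].
  apply/setP => -[a b]; rewrite !inE andbT.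
  apply/idP/imsetP => [a_lt | [a' _ ->]]; last exact: (ltn_ord a').
  by exists (Ordinal a_lt); last apply: val_inj.
by rewrite cardsX card_imset ?cardsT ?card_ord // => i j [/val_inj].
Qed.

Lemma exists_subset_card (T : finType) (A : {set T}) k :
  (k <= #|A|)%N -> exists2 B : {set T}, B \subset A & #|B| = k.
Proof.
move=> kA; exists [set x in take k (enum A)].
  by apply/subsetP => x; rewrite inE => /mem_take; rewrite mem_enum.
by rewrite cardsE (card_uniqP (take_uniq _ (enum_uniq _))) size_takel // -cardE.
Qed.

Lemma leq_mul_predn_exp (q n k : nat) : (1 < q)%N ->
  (n * q.-1 <= (q ^ k).-1)%N = (n <= \sum_(i < k) q ^ i)%N.
Proof. by move=> q1; rewrite predn_exp mulnC leq_pmul2l // -subn1 subn_gt0. Qed.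

Lemma eqn_mul_predn_exp (q n k : nat) : (1 < q)%N ->
  (n * q.-1 == (q ^ k).-1)%N = (n == \sum_(i < k) q ^ i)%N.
Proof. by move=> q1; rewrite predn_exp mulnC eqn_pmul2l // -subn1 subn_gt0. Qed.

Lemma mxrank_zero_rows (F : fieldType) (l m k : nat) (A : 'M[F]_(l, m)) :
  (forall (a : 'I_l) (b : 'I_m), (k <= a)%N -> A a b = 0) -> (\rank A <= k)%N.
Proof.
move=> A0; have [kl|lk] := leqP k l; last exact: leq_trans (rank_leq_row A) (ltnW lk).
suff -> : A = pid_mx k *m A by rewrite (leq_trans (mxrankM_maxl _ _)) ?rank_pid_mx.
apply/matrixP => i j; rewrite mxE (bigD1 i) //= big1 ?addr0 => [|i' ne_i'i].
  rewrite mxE eqxx mulr_natl.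
  by case: ltnP => [_|ki]; [rewrite mulr1n | rewrite mulr0n A0].
by rewrite mxE val_eqE eq_sym (negbTE ne_i'i) mul0r.
Qed.

Section LinearForms.
Variables (F : finFieldType) (l m : nat).
Implicit Types (A M : 'M[F]_(l, m)) (S : {set 'I_l * 'I_m}).

Definition form A M : F := \sum_a \sum_b A a b * M a b.

Lemma formC A M : form A M = form M A.
Proof. by apply: eq_bigr => a _; apply: eq_bigr => b _; rewrite mulrC. Qed.

Lemma formZr A c M : form A (c *: M) = c * form A M.
Proof.
rewrite /form mulr_sumr; apply: eq_bigr => a _; rewrite mulr_sumr.
by apply: eq_bigr => b _; rewrite mxE mulrCA.
Qed.

Lemma form_deltal a b M : form (delta_mx a b) M = M a b.
Proof.
rewrite /form (bigD1 a) //= [X in _ + X]big1 ?addr0 => [|a' ne_a'a]; last first.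
  by apply: big1 => b' _; rewrite mxE (negbTE ne_a'a) mul0r.
rewrite (bigD1 b) //= [X in _ + X]big1 ?addr0 => [|b' ne_b'b].
  by rewrite mxE !eqxx mul1r.
by rewrite mxE eqxx (negbTE ne_b'b) mul0r.
Qed.

Lemma form_mxvec A M : \sum_k mxvec A 0 k * mxvec M 0 k = form A M.
Proof.
rewrite /form pair_bigA (reindex _ (curry_mxvec_bij _ _)) /=.
by apply: eq_bigr => [[a b]] _; rewrite !mxvecE.
Qed.

Definition supported S : {set 'M[F]_(l, m)} :=
  [set A : 'M[F]_(l, m) | [forall p, (p \notin S) ==> (A p.1 p.2 == 0)]].

Lemma supportedP S A :
  reflect (forall p, p \notin S -> A p.1 p.2 = 0) (A \in supported S).
Proof.
rewrite inE; apply: (iffP forallP) => [A0 p pS | A0 p].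
  by apply/eqP; move/implyP: (A0 p); apply.
by apply/implyP => /A0 ->.
Qed.

Lemma supported_lin S a A B :
  A \in supported S -> B \in supported S -> a *: A + B \in supported S.
Proof.
move=> /supportedP A0 /supportedP B0; apply/supportedP => p pS.
by rewrite !mxE A0 ?B0 // mulr0 addr0.
Qed.

Lemma supported0 S : 0 \in supported S.
Proof. by apply/supportedP => p _; rewrite mxE. Qed.

Lemma scaler_closed_supported S : GRing.scaler_closed (supported S).
Proof. by move=> a A SA; rewrite -[_ *: _]addr0 supported_lin ?supported0. Qed.

Lemma delta_supported S a b : (a, b) \in S -> delta_mx a b \in supported S.
Proof.
move=> abS; apply/supportedP => [[a' b']] /= pS; rewrite mxE.
by case: eqP => [ea|]; case: eqP => [eb|] //=; rewrite ea eb abS in pS.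
Qed.

Lemma card_supported S : #|supported S| = (#|F| ^ #|S|)%N.
Proof.
have -> : #|F| = #|(predT : pred F)| by apply: eq_card.
rewrite -(card_pffun_on 0 S) -(card_imset _ (@val_inj _ _ 'M[F]_(l, m))).
apply: eq_card => f; apply/imsetP/pffun_onP.
  case=> A /supportedP A0 -> {f}; split => //; apply/subsetP => p.
  by rewrite !inE; apply: contraR => /A0; case: p => a b ?; apply/eqP.
case=> /subsetP fS _; exists (Matrix f) => //; apply/supportedP => p pS.
by apply/eqP; apply: contraNT pS => /fS; case: p.
Qed.

Lemma form_supportedC S A M :
  A \in supported (~: S) -> M \in supported S -> form A M = 0.
Proof.
move=> /supportedP A0 /supportedP M0; apply: big1 => a _; apply: big1 => b _.
have [abS | abNS] := boolP ((a, b) \in S).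
  by rewrite (A0 (a, b)) ?inE ?abS ?mul0r.
by rewrite (M0 (a, b)) // mulr0.
Qed.

Lemma mxrank_supported S k A : {in S, forall p : 'I_l * 'I_m, p.1 < k}%N ->
  A \in supported S -> (\rank A <= k)%N.
Proof.
move=> Sk /supportedP A0; apply: mxrank_zero_rows => a b ka.
by apply: (A0 (a, b)); apply: contraL ka => /Sk /= ak; rewrite -ltnNge.
Qed.

End LinearForms.

Arguments supported {F l m} S.

Section DeterminantalCode.
Variables (F : finFieldType) (l m : nat) (R : {set 'M[F]_(l, m)}).
Local Notation rep i := (@enum_val _ (pred_of_set R) i).
Implicit Types (D : {vspace 'rV[F]_#|R|}) (i : 'I_#|R|).
Implicit Types (S : {set 'I_l * 'I_m}) (W : {set 'M[F]_(l, m)}).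

Lemma evE A i : ev R A 0 i = form A (rep i).
Proof. by rewrite mxE. Qed.

Lemma ev_linear : linear (ev R).
Proof.
move=> a A B; apply/rowP => i; rewrite !mxE mulr_sumr -big_split.
apply: eq_bigr => x _; rewrite mulr_sumr -big_split; apply: eq_bigr => y _ /=.
by rewrite !mxE mulrDl mulrA.
Qed.

Lemma ev0 : ev R 0 = 0.
Proof.
apply/rowP => i; rewrite !mxE big1 // => a _.
by rewrite big1 // => b _; rewrite mxE mul0r.
Qed.

Lemma mem_span_ev (W : {pred 'M[F]_(l, m)}) v :
  0 \in W -> (forall a A B, A \in W -> B \in W -> a *: A + B \in W) ->
  v \in <<[seq ev R A | A in W]>>%VS -> exists2 A, A \in W & v = ev R A.
Proof.
move=> W0 Wlin; move: v.
apply: (span_ind (P := fun v => exists2 A, A \in W & v = ev R A)).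
- by exists 0; rewrite ?ev0.
- by move=> a _ _ [A WA ->] [B WB ->]; exists (a *: A + B); rewrite ?Wlin ?ev_linear.
- by move=> _ /imageP [A WA ->]; exists A.
Qed.

Lemma mem_detcode c : c \in detcode R -> exists A, c = ev R A.
Proof. by case/(mem_span_ev (W := 'M[F]_(l, m))) => // A _ ->; exists A. Qed.

Lemma ev_detcode A : ev R A \in detcode R.
Proof. exact/memv_span/image_f. Qed.

Definition zero_set (D : {vspace 'rV[F]_#|R|}) : {set 'I_#|R|} :=
  [set i | [forall c, (c \in D) ==> (c 0 i == 0)]].

Lemma support_weight_zero_set D : (support_weight D + #|zero_set D| = #|R|)%N.
Proof.
rewrite -[RHS](card_ord #|R|) -(cardsC (zero_set D)) addnC; congr (_ + _)%N.
apply: eq_card => i; rewrite !inE negb_forall; apply: eq_existsb => c.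
by rewrite negb_imply.
Qed.

Lemma zero_setP D i :
  reflect (forall c, c \in D -> c 0 i = 0) (i \in zero_set D).
Proof.
rewrite inE; apply: (iffP forallP) => [Z0 c Dc | Z0 c].
  by apply/eqP; move/implyP: (Z0 c); apply.
by apply/implyP => /Z0 ->.
Qed.

Definition zero_set_mx D : 'M[F]_(#|R|, l * m) :=
  \matrix_(i, k) (if i \in zero_set D then mxvec (rep i) 0 k else 0).

Lemma mxvec_rep_sub D i : i \in zero_set D -> (mxvec (rep i) <= zero_set_mx D)%MS.
Proof.
move=> iZ; suff -> : mxvec (rep i) = row i (zero_set_mx D) by apply: row_sub.
by apply/rowP => k; rewrite !mxE iZ.
Qed.

Lemma mem_kermx_zero_set_mx D c : (D <= detcode R)%VS -> c \in D ->
  exists2 A, (mxvec A <= kermx (zero_set_mx D)^T)%MS & c = ev R A.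
Proof.
move=> DC Dc; have [A cA] := mem_detcode (subvP DC _ Dc); exists A => //.
apply/sub_kermxP/rowP => i; rewrite !mxE.
have [iZ | iNZ] := boolP (i \in zero_set D); last first.
  by apply: big1 => k _; rewrite !mxE (negbTE iNZ) mulr0.
under eq_bigr => k _ do rewrite !mxE iZ.
by rewrite form_mxvec -evE -cA; apply/zero_setP: Dc.
Qed.

Lemma rank_zero_set_mx D : (D <= detcode R)%VS ->
  (\rank (zero_set_mx D) <= l * m - \dim D)%N.
Proof.
move=> DC; have q_gt1 := card_finNzRing_gt1 F.
suff : (#|F| ^ \dim D <= #|F| ^ (l * m - \rank (zero_set_mx D)))%N.
  by rewrite leq_exp2l //; have := rank_leq_col (zero_set_mx D); lia.
rewrite -card_vspace -mxrank_tr -mxrank_ker -card_rowspace.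
apply: leq_trans (leq_imset_card (fun v => ev R (vec_mx v)) _).
apply/subset_leq_card/subsetP => c /(mem_kermx_zero_set_mx DC) [A kerA ->].
by apply/imsetP; exists (mxvec A); rewrite ?inE ?mxvecK.
Qed.

Definition subcode S : {vspace 'rV[F]_#|R|} := <<[seq ev R A | A in supported S]>>%VS.

Lemma mem_subcode S c : (c \in subcode S) = (c \in ev R @: supported S).
Proof.
apply/idP/imsetP => [|[A SA ->]]; last exact/memv_span/image_f.
by case/(mem_span_ev (supported0 _ S) (@supported_lin _ _ _ S)) => A SA ->; exists A.
Qed.

Lemma subcode_sub S : (subcode S <= detcode R)%VS.
Proof. by apply/span_subvP => _ /imageP [A _ ->]; apply: ev_detcode. Qed.

Lemma zero_set_subcode S : zero_set (subcode (~: S)) = [set i | rep i \in supported S].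
Proof.
apply/setP => i; rewrite [in RHS]inE; apply/zero_setP/idP => [Z0 | Si c].
  apply/supportedP => -[a b] abS; rewrite -form_deltal -evE Z0 // mem_subcode.
  by rewrite imset_f // delta_supported // inE.
by rewrite mem_subcode => /imsetP [A SA ->]; rewrite evE (form_supportedC SA).
Qed.

Section Representatives.
Variable t : nat.
Hypothesis HR : is_rep_system t R.

Lemma rep_neq0 i : rep i != 0.
Proof. exact: (HR.1 _ (enum_valP i)).1. Qed.

Lemma rep_rank i : (\rank (rep i) <= t)%N.
Proof. exact: (HR.1 _ (enum_valP i)).2. Qed.

Lemma rep_exists M : M != 0 -> (\rank M <= t)%N ->
  exists i, exists2 c : F, c != 0 & M = c *: rep i.
Proof.
move=> M0 Mt; have [N [[RN [c [c0 ->]]] _]] := HR.2 M M0 Mt.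
by exists (enum_rank_in RN N), c; rewrite ?enum_rankK_in.
Qed.

Lemma rep_scale_inj i j a b : a != 0 -> a *: rep i = b *: rep j -> i = j /\ a = b.
Proof.
move=> a0 eq_ab; have aM0 : a *: rep i != 0 by rewrite scaler_eq0 negb_or a0 rep_neq0.
have b0 : b != 0 by apply: contraNneq aM0 => b0; rewrite eq_ab b0 scale0r.
have aMt : (\rank (a *: rep i) <= t)%N := leq_trans (mxrank_scale _ _) (rep_rank i).
have [N [_ uniqN]] := HR.2 _ aM0 aMt.
have ij : i = j.
  apply: enum_val_inj; rewrite -(uniqN (rep i)) ?(uniqN (rep j)) //.
  - by split; [exact: enum_valP | exists b].
  - by split; [exact: enum_valP | exists a].
split=> //; subst j; apply/eqP; rewrite -subr_eq0.
have : (a - b) *: rep i == 0 by rewrite scalerBl eq_ab subrr.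
by rewrite scaler_eq0 (negbTE (rep_neq0 i)) orbF.
Qed.

Lemma ev_inj : (0 < t)%N -> injective (ev R).
Proof.
move=> t_gt0 A B eqAB; apply/matrixP => a b.
have delta0 : delta_mx a b != 0 :> 'M[F]_(l, m).
  by apply/eqP => /matrixP /(_ a b) /eqP; rewrite !mxE !eqxx oner_eq0.
have delta_t : (\rank (delta_mx a b : 'M[F]_(l, m)) <= t)%N by rewrite mxrank_delta.
have [i [c _ delta_rep]] := rep_exists delta0 delta_t.
rewrite -[A a b]form_deltal -[B a b]form_deltal !(formC (delta_mx a b)) delta_rep.
by rewrite !formZr -!evE eqAB.
Qed.

Definition scaled_reps W : {set 'M[F]_(l, m)} :=
  [set p.2 *: rep p.1 | p in setX [set i | rep i \in W] [set~ 0]].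

Lemma card_scaled_reps W :
  #|scaled_reps W| = (#|[set i | rep i \in W]| * #|F|.-1)%N.
Proof.
rewrite card_in_imset ?cardsX ?cardsC1 // => -[i a] [j b].
by rewrite !inE /= => /andP [_ a0] _ /(rep_scale_inj a0) [-> ->].
Qed.

Lemma scaled_reps_sub W : GRing.scaler_closed W -> scaled_reps W \subset W :\ 0.
Proof.
move=> Wsc; apply/subsetP => M /imsetP [[i a]]; rewrite !inE /= => /andP [Wi a0] ->.
by rewrite scaler_eq0 negb_or a0 rep_neq0 Wsc.
Qed.

Lemma scaled_repsE W : GRing.scaler_closed W -> {in W, forall M, \rank M <= t}%N ->
  scaled_reps W = W :\ 0.
Proof.
move=> Wsc Wt; apply/eqP; rewrite eqEsubset scaled_reps_sub //=.
apply/subsetP => M /setD1P [M0 WM]; have [i [c c0 EM]] := rep_exists M0 (Wt M WM).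
apply/imsetP; exists (i, c) => //; rewrite !inE c0 andbT /=.
by rewrite -[rep i]scale1r -(mulVf c0) -scalerA -EM Wsc.
Qed.

Lemma card_zero_set_le D : (D <= detcode R)%VS ->
  (#|zero_set D| * #|F|.-1 <= (#|F| ^ (l * m - \dim D)).-1)%N.
Proof.
move=> DC; pose W := [set M : 'M[F]_(l, m) | (mxvec M <= zero_set_mx D)%MS].
have Wsc : GRing.scaler_closed W.
  by move=> a M; rewrite !inE linearZ; apply: scalemx_sub.
have ZW : zero_set D \subset [set i | rep i \in W].
  by apply/subsetP => i /mxvec_rep_sub; rewrite !inE.
have cardW0 : #|W :\ 0| = (#|F| ^ \rank (zero_set_mx D)).-1.
  by rewrite -card_mxvec_sub (cardsD1 0 W) inE linear0 sub0mx.
rewrite (leq_trans (leq_mul (subset_leq_card ZW) (leqnn _))) // -card_scaled_reps.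
rewrite (leq_trans (subset_leq_card (scaled_reps_sub Wsc))) // cardW0.
by rewrite -!subn1 leq_sub2r // leq_exp2l ?card_finNzRing_gt1 ?rank_zero_set_mx.
Qed.

Lemma ghw_lower D : (D <= detcode R)%VS ->
  (#|R| <= support_weight D + \sum_(i < l * m - \dim D) #|F| ^ i)%N.
Proof.
move=> DC; rewrite -[X in (X <= _)%N](support_weight_zero_set D) leq_add2l.
by rewrite -leq_mul_predn_exp ?card_finNzRing_gt1 ?card_zero_set_le.
Qed.

Lemma dim_subcode S : (0 < t)%N -> \dim (subcode S) = #|S|.
Proof.
move=> t_gt0; apply/eqP; rewrite -(eqn_exp2l _ _ (card_finNzRing_gt1 F)) -card_vspace.
rewrite (eq_card (mem_subcode _)) card_in_imset ?card_supported //.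
exact: in2W (ev_inj t_gt0).
Qed.

Lemma card_zero_set_subcode S : {in S, forall p : 'I_l * 'I_m, p.1 < t}%N ->
  (#|zero_set (subcode (~: S))| * #|F|.-1 = (#|F| ^ #|S|).-1)%N.
Proof.
move=> S_top; rewrite zero_set_subcode -card_scaled_reps scaled_repsE.
- by rewrite -card_supported (cardsD1 0 (supported S)) supported0.
- exact: scaler_closed_supported.
- by move=> M; apply: mxrank_supported.
Qed.

Lemma ghw_upper s : (0 < t)%N -> (t <= l)%N ->
  ((l - t) * m <= s)%N -> (s <= l * m)%N ->
  exists D, [/\ (D <= detcode R)%VS, \dim D = s &
    (support_weight D + \sum_(i < l * m - s) #|F| ^ i = #|R|)%N].
Proof.
move=> t_gt0 tl ls sl.
have [S S_top cardS] : exists2 S : {set 'I_l * 'I_m},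
    S \subset [set p : 'I_l * 'I_m | (p.1 < t)%N] & #|S| = (l * m - s)%N.
  by apply: exists_subset_card; rewrite card_top_rows //; nia.
have cardSC : #|~: S| = s by have := cardsC S; rewrite card_prod !card_ord cardS; lia.
exists (subcode (~: S)); split; rewrite ?subcode_sub ?dim_subcode //.
apply/eqP; rewrite -[X in _ == X](support_weight_zero_set (subcode (~: S))).
rewrite eqn_add2l eq_sym -eqn_mul_predn_exp ?card_finNzRing_gt1 // -cardS.
by rewrite card_zero_set_subcode // => p /(subsetP S_top); rewrite inE.
Qed.

End Representatives.

End DeterminantalCode.

Theorem mainTheorem10 (F : finFieldType) (t l m s : nat)
    (R : {set 'M[F]_(l, m)}) :
  (1 <= t)%N -> (t <= l)%N -> (l <= m)%N ->
  ((l - t) * m <= s)%N -> (s <= l * m)%N -> (1 <= s)%N ->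
  is_rep_system t R ->
  exists d : nat, is_ghw (detcode R) s d /\
    (d + \sum_(i < l * m - s) #|F| ^ i = #|R|)%N.
Proof.
move=> t_gt0 tl _ ls sl _ HR.
have [D [DC dimD wD]] := ghw_upper HR t_gt0 tl ls sl.
exists (support_weight D); split => //; split=> [|D' D'C dimD']; first by exists D.
by rewrite -(leq_add2r (\sum_(i < l * m - s) #|F| ^ i)) wD -dimD' (ghw_lower HR D'C).
Qed.
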